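(* Let $\mathcal{F}_{2P_2}$ and $\mathcal{F}_{P_5}$ be as defined in the context. Then $\{C_7,C_9,C_{11},\ldots\}\subsetneq\mathcal{F}_{2P_2}$ and $\{C_7,C_9,C_{11},\ldots\}\subsetneq\mathcal{F}_{P_5}$. In particular, both $\mathcal{F}_{2P_2}$ and $\mathcal{F}_{P_5}$ are infinite.
   Context: All graphs are finite and simple. $C_n$ is the cycle on $n$ vertices, $P_5$ the path on $5$ vertices, and $2P_2$ the disjoint union of two edges. A graph is $H$-free if it has no induced subgraph isomorphic to $H$; for a set $\mathcal{F}$ of graphs, a graph is $\mathcal{F}$-free if it is $H$-free for every $H\in\mathcal{F}$. A graph $G=(V,E)$ is probe $H$-free if there is an independent set $N$ of $G$ and a set $F\subseteq\binom{N}{2}$ such that $(V,E\cup F)$ is $H$-free. The class of probe $H$-free graphs is closed under vertex deletion, so there is a unique minimal set of graphs $\mathcal{F}_H$ (up to isomorphism) such that a graph is probe $H$-free if and only if it is $\mathcal{F}_H$-free (equivalently, $\mathcal{F}_H$ is the set of minimal forbidden induced subgraphs: graphs that are not probe $H$-free but all of whose proper induced subgraphs are). *)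

From mathcomp Require Import all_boot.
Set Implicit Arguments. Unset Strict Implicit. Unset Printing Implicit Defensive.

Record sgraph := SGraph {
  vert : finType;
  adj : rel vert;
  adj_sym : symmetric adj;
  adj_irr : irreflexive adj }.

Definition induced_in (H : sgraph) (V : finType) (e : rel V) : Prop :=
  exists f : vert H -> V, injective f /\ forall x y, adj x y = e (f x) (f y).

Definition H_free (H : sgraph) (V : finType) (e : rel V) : Prop :=
  ~ @induced_in H V e.

Definition probe_free (H : sgraph) (V : finType) (e : rel V) : Prop :=
  exists (N : {set V}) (F : rel V),
    (forall x y, x \in N -> y \in N -> ~~ e x y) /\
    symmetric F /\
    (forall x y, F x y -> [/\ x \in N, y \in N & x != y]) /\
    @H_free H V (fun x y => e x y || F x y).

Definition sub_rel (V : finType) (e : rel V) (S : {set V}) : rel {x : V | x \in S} :=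
  fun x y => e (val x) (val y).

Definition in_FH (H G : sgraph) : Prop :=
  ~ @probe_free H (vert G) (@adj G) /\
  forall S : {set vert G}, S \proper [set: vert G] ->
    @probe_free H {x : vert G | x \in S} (@sub_rel (vert G) (@adj G) S).

Definition isomorphic (G1 G2 : sgraph) : Prop :=
  exists f : vert G1 -> vert G2, bijective f /\ forall x y, adj x y = adj (f x) (f y).

#[global] Arguments H_free : clear implicits.
#[global] Arguments probe_free : clear implicits.
Definition cycle_rel (n : nat) : rel 'I_n :=
  fun (i j : 'I_n) => (i != j) && ((j == (i.+1 %% n) :> nat) || (i == (j.+1 %% n) :> nat)).

Arguments cycle_rel : clear implicits.

Lemma cycle_sym (n : nat) : symmetric (cycle_rel n).
Proof. by move=> i j; rewrite /cycle_rel eq_sym orbC. Qed.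

Lemma cycle_irr (n : nat) : irreflexive (cycle_rel n).
Proof. by move=> i; rewrite /cycle_rel eqxx. Qed.

Definition cycle_graph (n : nat) : sgraph := SGraph (@cycle_sym n) (@cycle_irr n).

Definition p5_rel : rel 'I_5 := fun i j => (j == i.+1 :> nat) || (i == j.+1 :> nat).

Lemma p5_sym : symmetric p5_rel.
Proof. by move=> i j; rewrite /p5_rel orbC. Qed.

Lemma p5_irr : irreflexive p5_rel.
Proof. move=> i; rewrite /p5_rel; apply/negP => /orP [] /eqP /esym/eqP; by rewrite eqn_leq ltnn. Qed.

Definition P5 : sgraph := SGraph p5_sym p5_irr.

(* 2P2 on 'I_4 with edges {0,1} and {2,3}. *)
Definition twoP2_rel : rel 'I_4 := fun i j => (i != j) && ((i : nat)./2 == (j : nat)./2).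

Lemma twoP2_sym : symmetric twoP2_rel.
Proof. by move=> i j; rewrite /twoP2_rel eq_sym [_./2 == _]eq_sym. Qed.

Lemma twoP2_irr : irreflexive twoP2_rel.
Proof. by move=> i; rewrite /twoP2_rel eqxx. Qed.

Definition twoP2 : sgraph := SGraph twoP2_sym twoP2_irr.

From mathcomp Require Import all_boot zify zmodp.
Set Implicit Arguments. Unset Strict Implicit. Unset Printing Implicit Defensive.

(* An independent set N of an odd cycle C_n cannot alternate around it, so two
   consecutive vertices b+1, b+2 lie outside N.  Added edges only join vertices of
   N, so a short walk along the window b, ..., b+6 finds an induced 2P2 or P5 in
   C_n + F: for n >= 7, C_n is neither probe 2P2-free nor probe P5-free.
   Deleting a vertex leaves a path; completing one colour class of its
   2-colouring gives a split graph, which is 2P2-free and hence P5-free.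
   The graphs K2 + K3 (for 2P2) and a 7-vertex graph with a triangle (for P5)
   are further minimal obstructions, verified by computation from explicit
   certificates; the first is too small and the second is not triangle-free,
   so neither is an odd cycle of length at least 7. *)

Lemma in_FH_intro (H G : sgraph) :
  ~ probe_free H (vert G) (@adj G) ->
  (forall (S : {set vert G}) v, v \notin S ->
     probe_free H {x | x \in S} (@sub_rel _ (@adj G) S)) ->
  in_FH H G.
Proof. by move=> notG del; split=> // S /properP[_ [v _ /del]]. Qed.

Lemma split_twoP2_free (V : finType) (e : rel V) (C : pred V) :
  (forall x y, e x y -> C x || C y) ->
  (forall x y, C x -> C y -> x != y -> e x y) ->
  H_free twoP2 V e.
Proof.
move=> cover clique [f [f_inj f_adj]].
have cross (i j : 'I_4) : i < 2 <= j -> C (f i) -> C (f j) -> False.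
  move=> ij Ci Cj; have : (i != j) && ~~ twoP2_rel i j.
    by case: i j ij {Ci Cj} => [[|[|[|[|?]]]] ?] [[|[|[|[|?]]]] ?].
  by rewrite [twoP2_rel i j]f_adj -(inj_eq f_inj) => /andP[/(clique _ _ Ci Cj) ->].
have cover_f (i j : 'I_4) : twoP2_rel i j -> C (f i) || C (f j).
  by move=> ij; apply: cover; rewrite -f_adj.
have /orP[C0|C1] := cover_f (@Ordinal 4 0 isT) (@Ordinal 4 1 isT) isT;
have /orP[C2|C3] := cover_f (@Ordinal 4 2 isT) (@Ordinal 4 3 isT) isT;
  by [apply: cross C0 C2 | apply: cross C0 C3 | apply: cross C1 C2 | apply: cross C1 C3].
Qed.

Lemma twoP2_free_P5_free (V : finType) (e : rel V) : H_free twoP2 V e -> H_free P5 V e.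
Proof.
move=> free2 [f [f_inj f_adj]]; apply: free2.
exists (fun i : 'I_4 => f (lift (@Ordinal 5 2 isT) i)); split.
  by move=> i j /f_inj /lift_inj.
by move=> i j; rewrite -f_adj; case: i j => [[|[|[|[|?]]]] ?] [[|[|[|[|?]]]] ?].
Qed.

Lemma probe_free_twoP2_P5 (V : finType) (e : rel V) :
  probe_free twoP2 V e -> probe_free P5 V e.
Proof.
case=> N [F [N_stable [F_sym [F_N free2]]]].
by exists N, F; do 3!split=> //; exact: twoP2_free_P5_free.
Qed.

Definition path_rel : rel nat := fun i j => (j == i.+1) || (i == j.+1).

Section CycleWindows.

Variable m : nat.
Local Notation n := m.+1.

Lemma cycle_rel_inZp c i j : i < m -> j < m ->
  cycle_rel n (inZp (c + i)) (inZp (c + j)) = path_rel i j.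
Proof.
have succ x y : y < n -> ((c + y) %% n == ((c + x) %% n).+1 %% n) = (y == x.+1 %% n).
  move=> yn; rewrite -[_.+1 in RHS in _ == RHS]addn1 modnDml addn1 -addnS.
  by rewrite eqn_modDl (modn_small yn).
move=> im jm; rewrite /cycle_rel -val_eqE /= !succ ?eqn_modDl ?modn_small /path_rel; lia.
Qed.

Lemma cycle_rel_window c d i j : d <= i < d + m -> d <= j < d + m ->
  cycle_rel n (inZp (c + i)) (inZp (c + j)) = path_rel i j.
Proof.
move=> /andP[di im] /andP[dj jm].
rewrite -(subnKC di) -(subnKC dj) !addnA cycle_rel_inZp; try lia.
rewrite /path_rel; apply/orP/orP; case=> /eqP ?; lia.
Qed.

Lemma inZpDn t : inZp (t + n) = inZp t :> 'I_n.
Proof. by apply: val_inj; rewrite /= modnDr. Qed.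

Lemma inZp_window_inj c d x y : d <= x < d + n -> d <= y < d + n ->
  inZp (c + x) = inZp (c + y) :> 'I_n -> x = y.
Proof.
move=> /andP[dx xn] /andP[dy yn] /(congr1 val) /eqP /=.
rewrite -(subnKC dx) -(subnKC dy) !addnA eqn_modDl !modn_small; lia.
Qed.

Lemma window_copy h (pat : rel 'I_h) (F : rel 'I_n) c d (ks : seq nat) :
  6 <= m -> size ks = h -> uniq ks -> all (fun k => d <= k <= d + 5) ks ->
  (forall i j : 'I_h, pat i j = path_rel (nth 0 ks i) (nth 0 ks j)
                                  || F (inZp (c + nth 0 ks i)) (inZp (c + nth 0 ks j))) ->
  exists f : 'I_h -> 'I_n,
    injective f /\ forall i j, pat i j = cycle_rel n (f i) (f j) || F (f i) (f j).
Proof.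
move=> m6 size_ks uniq_ks /allP ks_window pat_ks.
have ks_in (i : 'I_h) : d <= nth 0 ks i <= d + 5.
  by apply: ks_window; rewrite mem_nth ?size_ks.
exists (fun i => inZp (c + nth 0 ks i)); split.
  move=> i j eq_ij; apply/val_inj/eqP.
  rewrite -(nth_uniq 0 _ _ uniq_ks) ?size_ks ?ltn_ord //.
  by apply/eqP/(inZp_window_inj (d := d) _ _ eq_ij); have := ks_in i; have := ks_in j; lia.
move=> i j; rewrite pat_ks (@cycle_rel_window c d) //;
  by have := ks_in i; have := ks_in j; lia.
Qed.

End CycleWindows.

Section OddCycleNotProbeFree.

Variables (m : nat) (N : {set 'I_m.+1}) (F : rel 'I_m.+1).
Local Notation n := m.+1.
Hypotheses (n_ge7 : 7 <= n)
  (N_stable : forall x y, x \in N -> y \in N -> ~~ cycle_rel n x y)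
  (F_sym : symmetric F) (F_N : forall x y, F x y -> [/\ x \in N, y \in N & x != y]).

Lemma F_notin_l x y : x \notin N -> F x y = false.
Proof. by move=> xN; apply/negP => /F_N[xN' _ _]; rewrite xN' in xN. Qed.

Lemma F_notin_r x y : y \notin N -> F x y = false.
Proof. by move=> yN; rewrite F_sym F_notin_l. Qed.

Lemma F_irr x : F x x = false.
Proof. by apply/negP => /F_N[_ _]; rewrite eqxx. Qed.

Lemma two_consecutive_outside : odd n ->
  exists b, (inZp (b + 1) \notin N) && (inZp (b + 2) \notin N).
Proof.
move=> n_odd; pose inN t := (inZp t : 'I_n) \in N.
have [/existsP[c out] | /existsPn none] := boolP [exists c : 'I_n, ~~ inN c && ~~ inN c.+1].
  by exists (c + m); rewrite -addnA addn1 inZpDn -addnA addn2 -addSnnS inZpDn.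
have alt t : inN t.+1 = ~~ inN t.
  have adj : cycle_rel n (inZp t) (inZp t.+1).
    by have := @cycle_rel_inZp m t 0 1; rewrite addn0 addn1 => -> //; lia.
  have := none (inZp t); rewrite /inN /= (_ : inZp (t %% n) = inZp t); last first.
    by apply: val_inj; rewrite /= modn_mod.
  rewrite (_ : inZp (t %% n).+1 = inZp t.+1); last first.
    by apply: val_inj; rewrite /= -addn1 modnDml addn1.
  have := @N_stable (inZp t) (inZp t.+1); rewrite adj.
  by case: (inZp t \in N); case: (inZp t.+1 \in N) => // /(_ isT isT).
have parity t : inN t = inN 0 (+) odd t.
  by elim: t => [|t IH]; rewrite ?addbF // alt IH /= addbN.
have period : inZp n = inZp 0 :> 'I_n by apply: val_inj; rewrite /= modnn mod0n.
by have := parity n; rewrite n_odd addbT /inN period; case: (inZp 0 \in N).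
Qed.

Variable b : nat.
Hypotheses (out1 : inZp (b + 1) \notin N) (out2 : inZp (b + 2) \notin N).

Local Ltac decide_F :=
  repeat match goal with
  | H : is_true (~~ _) |- context [F ?x ?y] => rewrite (@F_notin_l x y H)
  | H : is_true (~~ _) |- context [F ?x ?y] => rewrite (@F_notin_r x y H)
  | H : F ?x ?y = _ |- context [F ?x ?y] => rewrite H
  | H : F ?x ?y = _ |- context [F ?y ?x] => rewrite F_sym H
  | |- context [F ?x ?x] => rewrite F_irr
  end.

Local Ltac check_pairs :=
  move=> [[|[|[|[|[|?]]]]] ?] [[|[|[|[|[|?]]]]] ?] //=; decide_F; reflexivity.

Local Ltac window_at d ks :=
  apply: (window_copy (c := b) (d := d) (ks := ks)) => //; check_pairs.

Lemma window_twoP2 : @induced_in twoP2 'I_n (fun x y => cycle_rel n x y || F x y).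
Proof. by window_at 0 [:: 1; 2; 4; 5]. Qed.

Lemma window_P5 : @induced_in P5 'I_n (fun x y => cycle_rel n x y || F x y).
Proof.
(* In each branch at most one pair of the five chosen vertices lies in N, and
   the value of F on that pair is known. *)
have [_ | out0] := boolP (inZp (b + 0) \in N); last first.
  by window_at 0 [:: 0; 1; 2; 3; 4].
have [in3 | out3] := boolP (inZp (b + 3) \in N); last first.
  by window_at 0 [:: 1; 2; 3; 4; 5].
have out4 : inZp (b + 4) \notin N.
  apply/negP => in4; move: (N_stable in3 in4).
  by rewrite (@cycle_rel_window m b 0) //; lia.
case F03: (F (inZp (b + 0)) (inZp (b + 3))); last first.
  by window_at 0 [:: 0; 1; 2; 3; 4].
have [in5 | out5] := boolP (inZp (b + 5) \in N); last first.
  by window_at 0 [:: 1; 0; 3; 4; 5].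
have out6 : inZp (b + 6) \notin N.
  apply/negP => in6; move: (N_stable in5 in6).
  by rewrite (@cycle_rel_window m b 1) //; lia.
case F35: (F (inZp (b + 3)) (inZp (b + 5))).
  by window_at 1 [:: 1; 2; 3; 5; 6].
by window_at 0 [:: 1; 2; 3; 4; 5].
Qed.

End OddCycleNotProbeFree.

Lemma odd_cycle_not_probe_free_twoP2 n : 7 <= n -> odd n ->
  ~ probe_free twoP2 'I_n (cycle_rel n).
Proof.
case: n => [//|m] n_ge7 n_odd [N [F [N_stable [F_sym [F_N free]]]]].
have [b /andP[out1 out2]] := two_consecutive_outside n_ge7 N_stable n_odd.
exact: free (window_twoP2 n_ge7 F_sym F_N out1 out2).
Qed.

Lemma odd_cycle_not_probe_free_P5 n : 7 <= n -> odd n ->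
  ~ probe_free P5 'I_n (cycle_rel n).
Proof.
case: n => [//|m] n_ge7 n_odd [N [F [N_stable [F_sym [F_N free]]]]].
have [b /andP[out1 out2]] := two_consecutive_outside n_ge7 N_stable n_odd.
exact: free (window_P5 n_ge7 N_stable F_sym F_N out1 out2).
Qed.

Lemma cycle_offset_succ n v x : x < n -> v < n -> x != v -> x.+1 %% n != v ->
  (x.+1 %% n + n - v) %% n = ((x + n - v) %% n).+1.
Proof.
move=> xn vn xv yv; have [xn1 | xn1] := eqVneq x.+1 n.
  rewrite xn1 modnn in yv *; rewrite add0n modn_small; last by lia.
  have -> : x + n - v = n + (x - v) by lia.
  by rewrite modnDl modn_small; lia.
rewrite modn_small in yv *; try lia.
case: (leqP v x) => vx; last by rewrite !modn_small; lia.
have -> : x.+1 + n - v = n + (x.+1 - v) by lia.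
have -> : x + n - v = n + (x - v) by lia.
by rewrite !modnDl !modn_small; lia.
Qed.

Lemma cycle_offset_parity n (v x y : 'I_n) : cycle_rel n x y -> x != v -> y != v ->
  odd ((x + n - v) %% n) != odd ((y + n - v) %% n).
Proof.
move=> /andP[_ /orP[] /eqP xy]; rewrite -!val_eqE /= => xv yv.
  by rewrite xy in yv *; rewrite cycle_offset_succ ?ltn_ord // oddS; case: odd.
by rewrite xy in xv *; rewrite cycle_offset_succ ?ltn_ord // oddS; case: odd.
Qed.

Lemma cycle_delete_probe_free n (S : {set 'I_n}) (v : 'I_n) : v \notin S ->
  probe_free twoP2 {x | x \in S} (@sub_rel _ (cycle_rel n) S).
Proof.
move=> vS; pose C (x : {x | x \in S}) := odd ((val x + n - v) %% n).
have flip x y : sub_rel (cycle_rel n) x y -> C x != C y.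
  by move=> xy; apply: cycle_offset_parity => //; apply: contraNneq vS => <-; apply: valP.
exists [set x | C x], (fun x y => [&& x != y, C x & C y]).
split; [|split; [|split]].
- by move=> x y; rewrite !inE => Cx Cy; apply/negP => /flip; rewrite Cx Cy.
- by move=> x y; rewrite eq_sym (andbC (C x)).
- by move=> x y /and3P[xy Cx Cy]; rewrite !inE Cx Cy.
- apply: (@split_twoP2_free _ _ C) => x y.
    by case/orP=> [/flip | /and3P[_ -> _]] //; case: (C x); case: (C y).
  by move=> Cx Cy xy; rewrite /= xy Cx Cy orbT.
Qed.

Lemma odd_cycle_in_FH_twoP2 n : 7 <= n -> odd n -> in_FH twoP2 (cycle_graph n).
Proof.
move=> n_ge7 n_odd; apply: in_FH_intro => [|S v vS].
  exact: odd_cycle_not_probe_free_twoP2.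
exact: cycle_delete_probe_free vS.
Qed.

Lemma odd_cycle_in_FH_P5 n : 7 <= n -> odd n -> in_FH P5 (cycle_graph n).
Proof.
move=> n_ge7 n_odd; apply: in_FH_intro => [|S v vS].
  exact: odd_cycle_not_probe_free_P5.
exact: probe_free_twoP2_P5 (cycle_delete_probe_free vS).
Qed.

Fixpoint words (T : Type) (l : seq T) (h : nat) : seq (seq T) :=
  if h is h'.+1 then [seq x :: s | x <- l, s <- words l h'] else [:: [::]].

Lemma mem_words (T : eqType) (l : seq T) h s :
  (s \in words l h) = (size s == h) && all (mem l) s.
Proof.
elim: h s => [|h IH] s; first by case: s.
apply/allpairsP/idP => [[[x t] /= [xl tw ->]] | ].
  by rewrite /= eqSS xl -IH.
case: s => [|x s] //=; rewrite eqSS => /and3P[sh xl sl].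
by exists (x, s); rewrite IH sh.
Qed.

Lemma all_iotaP (k : nat) (P : pred nat) :
  reflect (forall x : 'I_k, P x) (all P (iota 0 k)).
Proof.
apply: (iffP allP) => [P_all x | P_ord x].
  by apply: P_all; rewrite mem_iota add0n ltn_ord.
by rewrite mem_iota => /andP[_ xk]; apply: (P_ord (Ordinal xk)).
Qed.

Definition all_pairs (k : nat) (r : rel nat) : bool :=
  all (fun x => all (r x) (iota 0 k)) (iota 0 k).

Lemma all_pairsP (k : nat) (r : rel nat) :
  reflect (forall x y : 'I_k, r x y) (all_pairs k r).
Proof. by apply: (iffP (all_iotaP _ _)) => rk x; apply/all_iotaP; apply: rk. Qed.

(* Spelled with [eqn] rather than [\in] because the latter is slow under [vm_compute]. *)
Definition edge_relN (E : seq (nat * nat)) : rel nat :=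
  fun x y => has (fun p => eqn p.1 x && eqn p.2 y || eqn p.1 y && eqn p.2 x) E.

Lemma edge_relNE (E : seq (nat * nat)) x y :
  edge_relN E x y = ((x, y) \in E) || ((y, x) \in E).
Proof.
rewrite -!has_pred1 -has_predU /edge_relN; apply: eq_has => -[a b].
by rewrite /= !xpair_eqE !eqnE.
Qed.

Definition endpoints (E : seq (nat * nat)) : pred nat :=
  fun x => x \in unzip1 E ++ unzip2 E.

Lemma edge_relN_sym (E : seq (nat * nat)) : symmetric (edge_relN E).
Proof. by move=> x y; rewrite !edge_relNE orbC. Qed.

Lemma edge_relN_endpoints (E : seq (nat * nat)) x y :
  edge_relN E x y -> endpoints E x && endpoints E y.
Proof.
have ends p : p \in E -> endpoints E p.1 && endpoints E p.2.
  by move=> pE; rewrite /endpoints !mem_cat (map_f fst pE) (map_f snd pE) orbT.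
by rewrite edge_relNE => /orP[] /ends //= /andP[-> ->].
Qed.

Lemma edge_relN_neq (E : seq (nat * nat)) x y :
  all (fun p => p.1 != p.2) E -> edge_relN E x y -> x != y.
Proof. by rewrite edge_relNE => /allP loopless /orP[] /loopless //=; rewrite eq_sym. Qed.

Definition edge_rel (k : nat) (E : seq (nat * nat)) : rel 'I_k :=
  fun x y => edge_relN E x y.

Lemma edge_rel_sym (k : nat) (E : seq (nat * nat)) : symmetric (@edge_rel k E).
Proof. by move=> x y; apply: edge_relN_sym. Qed.

Lemma edge_rel_irr (k : nat) (E : seq (nat * nat)) :
  all (fun p => p.1 != p.2) E -> irreflexive (@edge_rel k E).
Proof. by move=> loopless x; apply/negP => /(edge_relN_neq loopless); rewrite eqxx. Qed.

Section Certificates.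

Variables (h : nat) (aN : rel nat) (k : nat) (eN : rel nat).

Definition stableN (nb : pred nat) : bool :=
  all_pairs k (fun x y => ~~ [&& nb x, nb y & eN x y]).

Definition copyN (g : rel nat) (s : seq nat) : bool :=
  all_pairs h (fun i j => aN i j == g (nth 0 s i) (nth 0 s j)).

Definition meets_at_most_onceN (nb : pred nat) (s : seq nat) : bool :=
  all_pairs h (fun i j => (i == j) || ~~ (nb (nth 0 s i) && nb (nth 0 s j))).

Definition inj_words (l : seq nat) : seq (seq nat) := [seq s <- words l h | uniq s].

(* Every stable set N meets some induced copy of H in G in at most one vertex;
   such a copy survives in G + F, since F only joins distinct vertices of N. *)
Definition not_probe_freeN : bool :=
  let copies := [seq s <- inj_words (iota 0 k) | copyN eN s] in
  all (fun bs : seq bool =>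
         ~~ stableN (nth false bs) || has (meets_at_most_onceN (nth false bs)) copies)
      (words [:: true; false] k).

(* [P] lists the added edges of a probe completion of G - v; N is the set of
   their endpoints. *)
Definition probe_certificateN (v : nat) (P : seq (nat * nat)) : bool :=
  [&& stableN (endpoints P), all (fun p => p.1 != p.2) P &
      ~~ has (copyN (fun x y => eN x y || edge_relN P x y))
             (inj_words [seq x <- iota 0 k | x != v])].

Variables (a : rel 'I_h) (a_sym : symmetric a) (a_irr : irreflexive a) (e : rel 'I_k).
Hypotheses (aE : forall i j : 'I_h, a i j = aN i j)
  (eE : forall x y : 'I_k, e x y = eN x y).
Local Notation H := (SGraph a_sym a_irr).

Lemma inj_wordsP (l : seq nat) s :
  reflect [/\ size s = h, uniq s & {subset s <= l}] (s \in inj_words l).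
Proof.
rewrite mem_filter mem_words; apply: (iffP and3P) => [[us /eqP sh /allP sl] | [sh us sl]].
  by split.
by split=> //; [apply/eqP | apply/allP].
Qed.

Lemma not_probe_free_of_check : not_probe_freeN -> ~ probe_free H 'I_k e.
Proof.
move=> /allP check [N [F [N_stable [_ [F_N free]]]]]; apply: free.
pose bs := [seq x \in N | x <- enum 'I_k].
have nth_bs (x : 'I_k) : nth false bs x = (x \in N).
  by rewrite (nth_map x) ?size_enum_ord // nth_ord_enum.
have bs_word : bs \in words [:: true; false] k.
  by rewrite mem_words size_map size_enum_ord eqxx; apply/allP => -[] _; rewrite !inE.
have /orP[/negP[] | /hasP[s]] := check bs bs_word.
  apply/all_pairsP => x y; rewrite !nth_bs -eE.
  by apply/negP => /and3P[xN yN]; apply/negP/N_stable.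
rewrite mem_filter => /andP[/all_pairsP s_copy /inj_wordsP[sh s_uniq s_vert]].
move=> /all_pairsP s_once.
have s_lt (i : 'I_h) : nth 0 s i < k.
  by have := s_vert _ (mem_nth 0 (_ : i < size s)); rewrite sh mem_iota => /(_ (ltn_ord i)).
pose f i := Ordinal (s_lt i); have fE (i : 'I_h) : nth 0 s i = val (f i) by [].
exists f; split.
  move=> i j /(congr1 val) /= /eqP; rewrite nth_uniq ?sh // => /eqP; exact: val_inj.
move=> i j /=; rewrite aE (eqP (s_copy i j)) !fE -eE.
case Fij: F; rewrite ?orbF //; have [iN jN fij] := F_N _ _ Fij.
have := s_once i j; rewrite !fE !nth_bs iN jN orbF => /eqP/val_inj ij.
by rewrite ij eqxx in fij.
Qed.

Lemma probe_free_of_certificate (v : 'I_k) (P : seq (nat * nat)) (S : {set 'I_k}) :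
  v \notin S -> probe_certificateN v P ->
  probe_free H {x | x \in S} (@sub_rel _ e S).
Proof.
move=> vS /and3P[/all_pairsP P_stable loopless /hasPn no_copy].
exists [set x | endpoints P (val (val x))].
exists (fun x y => edge_relN P (val (val x)) (val (val y))).
split; [|split; [|split]].
- move=> x y; rewrite !inE /sub_rel eE => xN yN.
  by have := P_stable (val x) (val y); rewrite xN yN.
- by move=> x y; apply: edge_relN_sym.
- move=> x y xy; have /andP[xN yN] := edge_relN_endpoints xy.
  rewrite !inE xN yN; split=> //; apply: contraTneq (edge_relN_neq loopless xy).
  by move=> ->; rewrite eqxx.
- case=> f [f_inj f_adj].
  pose s := [seq val (val (f i)) | i <- enum 'I_h].
  have nth_s (i : 'I_h) : nth 0 s i = val (val (f i)).
    by rewrite (nth_map i) ?size_enum_ord // nth_ord_enum.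
  have s_word : s \in inj_words [seq x <- iota 0 k | x != val v].
    apply/inj_wordsP; split; first by rewrite size_map size_enum_ord.
      by rewrite map_inj_uniq ?enum_uniq // => i j /val_inj /val_inj /f_inj.
    move=> _ /mapP[i _ ->]; rewrite mem_filter mem_iota leq0n ltn_ord val_eqE !andbT.
    by apply: contraNneq vS => <-; apply: valP.
  have /negP[] := no_copy s s_word.
  by apply/all_pairsP => i j; rewrite !nth_s -aE -eE; apply/eqP; apply: f_adj.
Qed.

Lemma in_FH_of_certificates (Ps : seq (seq (nat * nat)))
    (e_sym : symmetric e) (e_irr : irreflexive e) :
  not_probe_freeN ->
  all (fun v => probe_certificateN v (nth [::] Ps v)) (iota 0 k) ->
  in_FH H (SGraph e_sym e_irr).
Proof.
move=> not_free /all_iotaP certified; apply: in_FH_intro.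
  exact: not_probe_free_of_check.
by move=> S v vS; apply: probe_free_of_certificate (certified v).
Qed.

End Certificates.

Definition matching_rel : rel nat := fun i j => (i != j) && (i./2 == j./2).

Definition K2_K3_edges := [:: (0, 1); (2, 3); (2, 4); (3, 4)].
Definition K2_plus_K3 : sgraph :=
  SGraph (@edge_rel_sym 5 K2_K3_edges) (@edge_rel_irr 5 K2_K3_edges isT).

Lemma K2_plus_K3_in_FH : in_FH twoP2 K2_plus_K3.
Proof.
apply: (@in_FH_of_certificates _ matching_rel _ (edge_relN K2_K3_edges) _ _ _ _
          (fun _ _ => erefl) (fun _ _ => erefl)
          [:: [::]; [::]; [:: (0, 3)]; [:: (0, 2)]; [:: (0, 2)]]); by vm_compute.
Qed.

(* The 7-cycle 0-3-1-4-6-2-5-0 with the chords 04, 16 and 35. *)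
Definition G7_edges :=
  [:: (0, 3); (0, 4); (0, 5); (1, 3); (1, 4); (1, 6); (2, 5); (2, 6); (3, 5); (4, 6)].
Definition G7 : sgraph := SGraph (@edge_rel_sym 7 G7_edges) (@edge_rel_irr 7 G7_edges isT).

Lemma G7_in_FH : in_FH P5 G7.
Proof.
apply: (@in_FH_of_certificates _ path_rel _ (edge_relN G7_edges) _ _ _ _
          (fun _ _ => erefl) (fun _ _ => erefl)
          [:: [:: (2, 3)]; [:: (2, 3)]; [::]; [:: (0, 1)]; [:: (0, 1)];
              [:: (0, 2)]; [:: (1, 2)]]);
  by vm_compute.
Qed.

Lemma K2_plus_K3_not_cycle n : 7 <= n -> ~ isomorphic K2_plus_K3 (cycle_graph n).
Proof. by move=> n_ge7 [f [/bij_eq_card]]; rewrite /= !card_ord => n5; lia. Qed.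

Lemma cycle7_triangle_free (x y z : 'I_7) :
  cycle_rel 7 x y -> cycle_rel 7 y z -> cycle_rel 7 x z -> False.
Proof.
by case: x y z => [[|[|[|[|[|[|[|?]]]]]]] ?] [[|[|[|[|[|[|[|?]]]]]]] ?] [[|[|[|[|[|[|[|?]]]]]]] ?].
Qed.

Lemma G7_not_cycle n : 7 <= n -> ~ isomorphic G7 (cycle_graph n).
Proof.
move=> n_ge7 [f [f_bij f_adj]]; have := bij_eq_card f_bij; rewrite /= !card_ord => n7.
subst n; pose o i (lt_i7 : i < 7) : 'I_7 := Ordinal lt_i7.
apply: (@cycle7_triangle_free (f (o 0 isT)) (f (o 3 isT)) (f (o 5 isT))).
- exact: esym (f_adj (o 0 isT) (o 3 isT)).
- exact: esym (f_adj (o 3 isT) (o 5 isT)).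
- exact: esym (f_adj (o 0 isT) (o 5 isT)).
Qed.

Theorem mainTheorem11 :
  (* {C_7, C_9, C_11, ...} is a proper subset of F_{2P2} *)
  ((forall n, 7 <= n -> odd n -> in_FH twoP2 (cycle_graph n)) /\
   (exists G, in_FH twoP2 G /\
      forall n, 7 <= n -> odd n -> ~ isomorphic G (cycle_graph n))) /\
  (* {C_7, C_9, C_11, ...} is a proper subset of F_{P5} *)
  ((forall n, 7 <= n -> odd n -> in_FH P5 (cycle_graph n)) /\
   (exists G, in_FH P5 G /\
      forall n, 7 <= n -> odd n -> ~ isomorphic G (cycle_graph n))) /\
  (* both are infinite *)
  (forall N, exists G, in_FH twoP2 G /\ N < #|vert G|) /\
  (forall N, exists G, in_FH P5 G /\ N < #|vert G|).
Proof.
have long_odd N : [/\ 7 <= 7 + N.*2, odd (7 + N.*2) & N < #|'I_(7 + N.*2)|].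
  by rewrite oddD odd_double card_ord; split=> //; lia.
split; [split|split; [split|split]].
- exact: odd_cycle_in_FH_twoP2.
- exists K2_plus_K3; split=> [|n n_ge7 _]; first exact: K2_plus_K3_in_FH.
  exact: K2_plus_K3_not_cycle.
- exact: odd_cycle_in_FH_P5.
- exists G7; split=> [|n n_ge7 _]; first exact: G7_in_FH.
  exact: G7_not_cycle.
- move=> N; have [n_ge7 n_odd n_big] := long_odd N.
  by exists (cycle_graph (7 + N.*2)); split=> //; exact: odd_cycle_in_FH_twoP2.
- move=> N; have [n_ge7 n_odd n_big] := long_odd N.
  by exists (cycle_graph (7 + N.*2)); split=> //; exact: odd_cycle_in_FH_P5.
Qed.
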